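(* Let $\mathbb{F}\in\{\mathbb{R},\mathbb{C}\}$, $A\in\mathbb{F}^{m\times n}$, $b\in\mathbb{F}^m$, $\mu>0$, and let $N\ge1$ be an integer with $\beta_N>0$. Let $x'$ be a stationary point of $\mathcal{K}_{reg}$, set $z'=(I-A^*A)x'+A^*b$, and assume that $$|z'_i|\notin\Big[\beta_N^2\sqrt{\mu},\ \frac{\sqrt{\mu}}{\beta_N^2}\Big]\quad\text{for all }i\in\{1,\dots,n\}$$ (this condition is automatically fulfilled if $\beta_N>1$, the interval then being empty). If $x''\neq x'$ is another stationary point of $\mathcal{K}_{reg}$, then $\mathrm{card}(x''-x')>N$.
   Context: $\mathrm{card}(x)$ is the number of nonzero entries; $\beta_k=\inf\{\|Ax\|_2/\|x\|_2:x\ne0,\ \mathrm{card}(x)\le k\}$. $\mathcal{K}_{reg}(x)=\mathcal{Q}_2(\mu\,\mathrm{card})(x)+\|Ax-b\|_2^2$ with $\mathcal{Q}_2(\mu\,\mathrm{card})(x)=\sum_{j=1}^n\big(\mu-(\max\{\sqrt{\mu}-|x_j|,0\})^2\big)$. $A^*$ is the conjugate transpose, $\langle x,y\rangle=\sum_i x_i\overline{y_i}$. A stationary point of a function $g$ is a point $x$ with $0$ in the Fréchet subdifferential $\hat\partial g(x)$, i.e. the set of $v$ with $\liminf_{y\to x,y\ne x}(g(y)-g(x)-\mathrm{Re}\langle v,y-x\rangle)/\|y-x\|\ge0$. *)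

From HB Require Import structures.
From mathcomp Require Import all_boot all_order all_algebra.
From mathcomp Require Import classical_sets reals.
From mathcomp.real_closed Require Import complex.
Set Implicit Arguments. Unset Strict Implicit. Unset Printing Implicit Defensive.
Import Order.TTheory GRing.Theory Num.Theory.
Local Open Scope ring_scope.
Local Open Scope classical_set_scope.

Record scalar_field (R : realType) := ScalarField {
  sc_type :> comNzRingType;
  sc_abs  : sc_type -> R;
  sc_re   : sc_type -> R;
  sc_conj : sc_type -> sc_type }.

Definition realF (R : realType) : scalar_field R :=
  @ScalarField R R (fun x => `|x|) (fun x => x) (fun x => x).

Definition complexF (R : realType) : scalar_field R :=
  @ScalarField R (complex.complex R : comNzRingType)
    (fun z => Num.sqrt (complex.Re z ^+ 2 + complex.Im z ^+ 2))
    (fun z => complex.Re z) (@complex.conjc R).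

Section Defs.
Variables (R : realType) (F : scalar_field R).

Definition card_nz (n : nat) (x : 'cV[F]_n) : nat := #|[set i | x i 0 != 0]|.

Definition norm2 (n : nat) (x : 'cV[F]_n) : R :=
  Num.sqrt (\sum_i (sc_abs (x i 0)) ^+ 2).

Definition inner (n : nat) (x y : 'cV[F]_n) : F :=
  \sum_i x i 0 * sc_conj (y i 0).

Definition adjoint (m n : nat) (A : 'M[F]_(m, n)) : 'M[F]_(n, m) :=
  map_mx (@sc_conj R F) A^T.

Definition beta (m n : nat) (A : 'M[F]_(m, n)) (k : nat) : R :=
  inf [set r : R | exists x : 'cV[F]_n,
         [/\ x != 0, (card_nz x <= k)%N & r = norm2 (A *m x) / norm2 x]].

Definition Q2_card (n : nat) (mu : R) (x : 'cV[F]_n) : R :=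
  \sum_j (mu - (Num.max (Num.sqrt mu - sc_abs (x j 0)) 0) ^+ 2).

Definition Kreg (m n : nat) (A : 'M[F]_(m, n)) (b : 'cV[F]_m) (mu : R)
  (x : 'cV[F]_n) : R :=
  Q2_card mu x + (norm2 (A *m x - b)) ^+ 2.

(* Frechet subdifferential: v is in \hat\partial g(x) iff
   liminf_{y -> x, y <> x} (g y - g x - Re <v, y - x>) / ||y - x|| >= 0,
   written out with epsilon/delta. *)
Definition frechet_subgrad (n : nat) (g : 'cV[F]_n -> R) (x v : 'cV[F]_n) : Prop :=
  forall eps : R, 0 < eps -> exists2 delta : R, 0 < delta &
    forall y : 'cV[F]_n, y != x -> norm2 (y - x) < delta ->
      - eps <= (g y - g x - sc_re (inner v (y - x))) / norm2 (y - x).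

Definition stationary (n : nat) (g : 'cV[F]_n -> R) (x : 'cV[F]_n) : Prop :=
  frechet_subgrad g x 0.

End Defs.

(* Write z = (I - A^*A) x + A^*b.  Stationarity of K_reg decouples into one
   scalar condition per coordinate: z_i = x_i if |x_i| >= sqrt mu, z_i is x_i
   rescaled to modulus sqrt mu if 0 < |x_i| < sqrt mu, and |z_i| <= sqrt mu if
   x_i = 0; this comes from testing the Frechet condition along single
   coordinates, using the concavity of t |-> mu - (sqrt mu - t)_+^2.
   For two stationary points put w = x'' - x' and B = beta_N^2.  Then
   z'' - z' = w - A^*A w, so Re <w, z'' - z'> = |w|^2 - |Aw|^2, which is at most
   (1 - B)|w|^2 if card w <= N.  On the other hand, the scalar conditions and the
   hypothesis |z'_i| < B sqrt mu or |z'_i| > sqrt mu / B give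
   Re (w_i conj (z''_i - z'_i)) > (1 - B)|w_i|^2 whenever w_i <> 0, because
   t |-> max(sqrt mu, t) is (1 - B)-strongly monotone at |x'_i|. *)

From HB Require Import structures.
From mathcomp Require Import all_boot all_order all_algebra.
From mathcomp Require Import classical_sets reals.
From mathcomp.real_closed Require Import complex.
From mathcomp Require Import ring lra.
Import Order.TTheory GRing.Theory Num.Theory.
Set Implicit Arguments. Unset Strict Implicit. Unset Printing Implicit Defensive.
Local Open Scope ring_scope.

(* The properties of R and C = R[i] over R used below, so that the argument is
   written once for both choices of [F]. *)
Record rclike (R : realType) (F : scalar_field R) := RCLike {
  emb : {rmorphism R -> F};
  conj_is_zmod_morphism : zmod_morphism (@sc_conj R F);
  conj_is_monoid_morphism : monoid_morphism (@sc_conj R F);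
  conjK : involutive (@sc_conj R F);
  conj_emb : forall r, sc_conj (emb r) = emb r;
  re_is_zmod_morphism : zmod_morphism (@sc_re R F);
  re_embM : forall r (x : F), sc_re (emb r * x) = r * sc_re x;
  re_conj : forall x : F, sc_re (sc_conj x) = sc_re x;
  re_le_abs : forall x : F, sc_re x <= sc_abs x;
  re_mul_conj : forall x : F, sc_re (x * sc_conj x) = sc_abs x ^+ 2;
  abs_ge0 : forall x : F, 0 <= sc_abs x;
  abs_eq0 : forall x : F, sc_abs x = 0 -> x = 0;
  absM : forall x y : F, sc_abs (x * y) = sc_abs x * sc_abs y;
  abs_emb : forall r, sc_abs (emb r) = `|r| }.

Lemma rclike_realF (R : realType) : rclike (realF R).
Proof.
apply: (@RCLike R (realF R) idfun) => //=.
- exact: ler_norm.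
- by move=> x; rewrite real_normK ?num_real.
- by move=> x /normr0_eq0.
- exact: normrM.
Qed.

Lemma rclike_complexF (R : realType) : rclike (complexF R).
Proof.
apply: (@RCLike R (complexF R) (real_complex R)) => /=.
- exact: conjc_is_additive.
- by split=> [|x y]; rewrite ?rmorph1 ?rmorphM.
- exact: conjcK.
- by move=> r; rewrite /= oppr0.
- by move=> [a b] [c d].
- by move=> r [a b] /=; rewrite mul0r subr0.
- by move=> [a b].
- move=> [a b] /=; apply: le_trans (ler_norm a) _.
  by rewrite -sqrtr_sqr ler_sqrt ?addr_ge0 ?sqr_ge0 // lerDl sqr_ge0.
- move=> [a b] /=; rewrite sqr_sqrtr ?addr_ge0 ?sqr_ge0 //.
  by rewrite mulrN opprK !expr2.
- by move=> x; apply: sqrtr_ge0.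
- by move=> [a b] /= h; apply: (@Normc.eq0_normc R).
- by move=> [a b] [c d]; exact: (@Normc.normcM R (a +i* b)%C (c +i* d)%C).
- by move=> r /=; rewrite expr0n /= addr0 sqrtr_sqr.
Qed.

Section RealInequalities.
Variable R : realFieldType.
Implicit Types a s e B K r z ka ks : R.

Lemma max0_sqr_ge_tangent e s s' :
  Num.max (e - s) 0 ^+ 2 - 2 * Num.max (e - s) 0 * (s' - s) <= Num.max (e - s') 0 ^+ 2.
Proof.
have sq := sqr_ge0 (s' - s).
by have [hs|hs] := leP (e - s) 0; have [hs'|hs'] := leP (e - s') 0; nra.
Qed.

Lemma ge0_of_small_slope a K :
  (forall eps, 0 < eps -> exists2 d, 0 < d &
     forall T, 0 < T -> T < d -> - eps * T <= a * T + K * T ^+ 2) ->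
  0 <= a.
Proof.
move=> slope; apply/ler_addgt0Pr => eps eps0.
have [d d0 hd] := slope (eps / 2) (divr_gt0 eps0 (ltr0Sn _ 1)).
pose T := Num.min (d / 2) (eps / 2 / (`|K| + 1)).
have K1 : 0 < `|K| + 1 by rewrite ltr_wpDl.
have T0 : 0 < T by rewrite lt_min !divr_gt0.
have Td : T < d by rewrite gt_min; apply/orP; left; lra.
have TK : `|K| * T < eps / 2.
  have : T <= eps / 2 / (`|K| + 1) by rewrite ge_min lexx orbT.
  rewrite ler_pdivlMr // => h; have := normr_ge0 K; nra.
have := hd T T0 Td; rewrite expr2 mulrA -mulrDl ler_pM2r //.
have := ler_norm K; nra.
Qed.

Lemma max_strongly_monotone e B a s : 0 <= e -> 0 <= a -> 0 < B -> a != s ->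
  (Num.max e s < B * e \/ e < B * Num.max e s) ->
  (1 - B) * (a - s) ^+ 2 < (a - s) * (Num.max e a - Num.max e s).
Proof.
move=> e0 a0 B0 as_ hs.
have sq : 0 < (a - s) ^+ 2 by rewrite exprn_even_gt0 //= subr_eq0.
have [B1|B1] := ltrP 1 B.
  have mono : 0 <= (a - s) * (Num.max e a - Num.max e s).
    have [ha|ha] := leP a s.
      by rewrite mulr_le0 ?subr_le0 // le_max2.
    by rewrite mulr_ge0 ?subr_ge0 // ?le_max2 // ltW.
  nra.
have Me : e <= Num.max e s by rewrite le_max lexx.
have eB : e < B * Num.max e s by case: hs => hs; nra.
move: eB; case: (leP e s) => [es eB|se eB]; last nra.
rewrite expr2 in sq *; have [ha|ha] := leP e a; first nra.
have : 0 < (s - a) * (B * s - e + (1 - B) * a) by apply: mulr_gt0; nra.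
nra.
Qed.

Lemma not_in_scaled_interval e B y : 0 < B ->
  ~ (B * e <= y <= e / B) -> y < B * e \/ e < B * y.
Proof.
move=> B0 out; have [lo|hi] := ltP y (B * e); [by left | right].
by rewrite -ltr_pdivrMl // mulrC ltNge; apply/negP => up; apply: out; rewrite hi.
Qed.

Lemma max_sub_gt_scaled e B a z : 0 < a -> 0 <= z -> z <= e -> 0 < B ->
  (z < B * e \/ e < B * z) -> (1 - B) * a < Num.max e a - z.
Proof.
move=> a0 z0 ze B0 hz.
by have [ha|ha] := leP e a; case: hz => hz; nra.
Qed.

Lemma max_strongly_monotone_cross e B a s r ka ks :
  0 <= e -> 0 < a -> 0 < B -> 1 <= ka -> 1 <= ks ->
  ka * a = Num.max e a -> ks * s = Num.max e s ->
  r <= a * s -> 0 < a ^+ 2 + s ^+ 2 - 2 * r ->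
  (Num.max e s < B * e \/ e < B * Num.max e s) ->
  (1 - B) * (a ^+ 2 + s ^+ 2 - 2 * r) < ka * a ^+ 2 + ks * s ^+ 2 - (ka + ks) * r.
Proof.
move=> e0 a0 B0 ka1 ks1 hka hks rs pos hs.
have split_gap : ka * a ^+ 2 + ks * s ^+ 2 - (ka + ks) * r - (1 - B) * (a ^+ 2 + s ^+ 2 - 2 * r)
    = ((a - s) * (Num.max e a - Num.max e s) - (1 - B) * (a - s) ^+ 2)
      + (ka + ks - 2 + 2 * B) * (a * s - r).
  by rewrite -hka -hks; ring.
rewrite -subr_gt0 split_gap.
have cross : 0 <= (ka + ks - 2 + 2 * B) * (a * s - r) by apply: mulr_ge0; lra.
have [as_|as_] := eqVneq a s.
  rewrite -as_ in pos *; rewrite subrr expr0n /= !mul0r mulr0 subrr add0r.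
  by apply: mulr_gt0; nra.
have gap := max_strongly_monotone e0 (ltW a0) B0 as_ hs.
by rewrite -subr_gt0 in gap; apply: ltr_wpDr cross gap.
Qed.

End RealInequalities.

Section RCLikeTheory.
Variables (R : realType) (F : scalar_field R) (FA : rclike F).
Local Notation abs := (@sc_abs R F).
Local Notation re := (@sc_re R F).
Local Notation conj := (@sc_conj R F).
Local Notation emb := (emb FA).
Implicit Types x y : F.

HB.instance Definition _ :=
  GRing.isZmodMorphism.Build F F conj (conj_is_zmod_morphism FA).
HB.instance Definition _ :=
  GRing.isMonoidMorphism.Build F F conj (conj_is_monoid_morphism FA).
HB.instance Definition _ :=
  GRing.isZmodMorphism.Build F R re (re_is_zmod_morphism FA).

Lemma re_mulC x y : re (x * conj y) = re (y * conj x).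
Proof. by rewrite -(re_conj FA) rmorphM /= (conjK FA) mulrC. Qed.

Lemma abs0 : abs 0 = 0.
Proof. by rewrite -(rmorph0 emb) (abs_emb FA) normr0. Qed.

Lemma absN x : abs (- x) = abs x.
Proof. by rewrite -mulN1r -(rmorphN1 emb) (absM FA) (abs_emb FA) normrN1 mul1r. Qed.

Lemma abs_conj x : abs (conj x) = abs x.
Proof.
apply/eqP; rewrite -(@eqrXn2 _ 2) ?(abs_ge0 FA) //.
by rewrite -!(re_mul_conj FA) (conjK FA) mulrC.
Qed.

Lemma abs_gt0 x : x != 0 -> 0 < abs x.
Proof.
by move=> x0; rewrite lt_def (abs_ge0 FA) andbT; apply: contra x0 => /eqP/(abs_eq0 FA)->.
Qed.

Lemma abs_embM r x : abs (emb r * x) = `|r| * abs x.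
Proof. by rewrite (absM FA) (abs_emb FA). Qed.

Lemma re_mul_conj_le x y : re (x * conj y) <= abs x * abs y.
Proof. by rewrite -(abs_conj y) -(absM FA) (re_le_abs FA). Qed.

Lemma abs_sqrD x y : abs (x + y) ^+ 2 = abs x ^+ 2 + 2 * re (y * conj x) + abs y ^+ 2.
Proof.
rewrite -!(re_mul_conj FA) rmorphD mulrDl !mulrDr !raddfD /= (re_mulC x y); ring.
Qed.

Definition q2_entry (mu : R) (v : F) : R := mu - Num.max (Num.sqrt mu - abs v) 0 ^+ 2.

Definition stationary_entry (mu : R) (s z : F) : Prop :=
  s = 0 /\ abs z <= Num.sqrt mu \/
  s != 0 /\ z = emb (Num.max (Num.sqrt mu) (abs s) / abs s) * s.

Lemma slope_bound (phi : F -> R) (D : F) (rho K : R) : 0 <= rho ->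
  (forall eps, 0 < eps -> exists2 d, 0 < d &
     forall u, 0 < abs u -> abs u < d -> - eps * abs u <= phi u) ->
  (forall u, phi u <= 2 * re (u * conj D) + rho * abs u + K * abs u ^+ 2) ->
  2 * abs D <= rho.
Proof.
move=> rho0 slope phi_le.
have [->|D0] := eqVneq D 0; first by rewrite abs0 mulr0.
have absD := abs_gt0 D0; have absD0 := lt0r_neq0 absD.
rewrite -subr_ge0; apply: (@ge0_of_small_slope _ _ K) => eps eps0.
have [d d0 hd] := slope eps eps0; exists d => // T T0 Td.
pose u := emb (- (T / abs D)) * D.
have absu : abs u = T.
  by rewrite abs_embM normrN ger0_norm ?(divfK absD0) // divr_ge0 ?ltW.
have reu : re (u * conj D) = - (T * abs D).
  by rewrite -mulrA (re_embM FA) (re_mul_conj FA) expr2 mulrA mulNr (divfK absD0) mulNr.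
have := le_trans (hd u _ _) (phi_le u); rewrite absu reu => /(_ T0 Td).
lra.
Qed.

Lemma stationary_entry_of_slope (mu S : R) (s g : F) :
  (forall eps, 0 < eps -> exists2 d, 0 < d & forall u, 0 < abs u -> abs u < d ->
     - eps * abs u <=
     q2_entry mu (s + u) - q2_entry mu s + 2 * re (u * conj g) + S * abs u ^+ 2) ->
  stationary_entry mu s (s - g).
Proof.
rewrite /stationary_entry /q2_entry; set e := Num.sqrt mu => slope.
have e0 : 0 <= e := sqrtr_ge0 mu.
have [s0|s0] := eqVneq s 0; [left | right]; split => //.
  rewrite s0 sub0r absN; suff : 2 * abs g <= 2 * e by lra.
  apply: (slope_bound (mulr_ge0 (ler0n _ 2) e0) slope (K := S)) => u.
  have := max0_sqr_ge_tangent e 0 (abs u).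
  rewrite s0 add0r abs0 !subr0 (max_l e0); lra.
have a0 := abs_gt0 s0; have a0' := lt0r_neq0 a0.
set a := abs s in a0 a0' *; set m := Num.max (e - a) 0; set c := m / a.
have c0 : 0 <= c by rewrite divr_ge0 ?le_max ?lexx ?orbT // ltW.
(* The Q_2 part has slope at most 2 c Re (u conj s) along u, so the slope
   condition forces g = - c s. *)
have D0 : emb c * s + g = 0.
  apply/(abs_eq0 FA)/eqP; rewrite eq_le (abs_ge0 FA) andbT -(pmulr_rle0 _ (ltr0Sn _ 1)).
  apply: (slope_bound (lexx 0) slope (K := c + S)) => u.
  have tangent := max0_sqr_ge_tangent e a (abs (s + u)); rewrite -/m in tangent.
  have chord : 2 * a * (abs (s + u) - a) <= 2 * re (u * conj s) + abs u ^+ 2.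
    have := sqr_ge0 (abs (s + u) - a); have := abs_sqrD s u; rewrite -/a; nra.
  have scaled : 2 * m * (abs (s + u) - a) <= c * (2 * re (u * conj s) + abs u ^+ 2).
    by rewrite -(divfK a0' m) -/c mulrCA -mulrA ler_wpM2l.
  rewrite rmorphD rmorphM /= (conj_emb FA) mulrDr (mulrCA u) (raddfD re) /= (re_embM FA) -/a -/m.
  lra.
have hM : Num.max e a = a + m by rewrite addr_maxr addr0 addrCA subrr addr0.
have hg : g = - (emb c * s) by apply/eqP; rewrite -addr_eq0 addrC D0.
by rewrite hg opprK hM mulrDl (divff a0') rmorphD rmorph1 mulrDl mul1r.
Qed.

Lemma re_mul_conj_embr r x y : re (x * conj (emb r * y)) = r * re (x * conj y).
Proof. by rewrite rmorphM /= (conj_emb FA) mulrCA (re_embM FA). Qed.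

Lemma abs_sqrB x y : abs (x - y) ^+ 2 = abs x ^+ 2 + abs y ^+ 2 - 2 * re (y * conj x).
Proof. by rewrite abs_sqrD absN mulNr (raddfN re) /=; ring. Qed.

Lemma re_mul_conj_emb2 kx ky x y :
  re ((x - y) * conj (emb kx * x - emb ky * y)) =
  kx * abs x ^+ 2 + ky * abs y ^+ 2 - (kx + ky) * re (y * conj x).
Proof.
rewrite rmorphB /= mulrBr (raddfB re) /= !re_mul_conj_embr !mulrBl !(raddfB re) /=.
by rewrite !(re_mul_conj FA) (re_mulC x y); ring.
Qed.

Lemma stationary_entry_nz mu s z : s != 0 -> stationary_entry mu s z ->
  exists2 k, 1 <= k & k * abs s = Num.max (Num.sqrt mu) (abs s) /\ z = emb k * s.
Proof.
move=> s0 [[/eqP]|[_ ->]]; first by rewrite (negbTE s0).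
have a0 := abs_gt0 s0.
exists (Num.max (Num.sqrt mu) (abs s) / abs s); last by rewrite divfK ?lt0r_neq0.
by rewrite ler_pdivlMr // mul1r le_max lexx orbT.
Qed.

Lemma stationary_entry_gap mu B s zs t zt : 0 < B ->
  stationary_entry mu s zs -> stationary_entry mu t zt ->
  ~ (B * Num.sqrt mu <= abs zs <= Num.sqrt mu / B) -> t != s ->
  (1 - B) * abs (t - s) ^+ 2 < re ((t - s) * conj (zt - zs)).
Proof.
move=> B0 hs ht /(not_in_scaled_interval B0) hzs ts.
have e0 : 0 <= Num.sqrt mu := sqrtr_ge0 mu.
have [s0|s0] := eqVneq s 0; have [t0|t0] := eqVneq t 0.
- by rewrite s0 t0 eqxx in ts.
- have [[_ zs_le]|[]] := hs; last by rewrite s0 eqxx.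
  have [kt kt1 [hkt ->]] := stationary_entry_nz t0 ht.
  have a0 := abs_gt0 t0.
  rewrite s0 subr0 rmorphB mulrBr (raddfB re) /= re_mul_conj_embr (re_mul_conj FA).
  have := max_sub_gt_scaled a0 ((abs_ge0 FA) zs) zs_le B0 hzs.
  have := re_mul_conj_le t zs.
  rewrite -hkt; nra.
- have [ks ks1 [hks zs_eq]] := stationary_entry_nz s0 hs; subst zs.
  have [[_ zt_le]|[]] := ht; last by rewrite t0 eqxx.
  have a0 := abs_gt0 s0.
  have abs_zs : abs (emb ks * s) = Num.max (Num.sqrt mu) (abs s).
    by rewrite abs_embM ger0_norm ?hks //; lra.
  rewrite abs_zs in hzs.
  have := max_strongly_monotone e0 (lexx 0) B0 (negbT (lt_eqF a0)) hzs.
  rewrite (max_l e0) !sub0r sqrrN -hks => gap.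
  rewrite t0 !sub0r absN rmorphB mulrBr (raddfB re) /= re_mul_conj_embr.
  rewrite !mulNr !(raddfN re) /= (re_mul_conj FA).
  have := re_mul_conj_le s zt; have := ler_wpM2l (ltW a0) zt_le.
  nra.
- have [ks ks1 [hks zs_eq]] := stationary_entry_nz s0 hs; subst zs.
  have [kt kt1 [hkt ->]] := stationary_entry_nz t0 ht.
  have abs_zs : abs (emb ks * s) = Num.max (Num.sqrt mu) (abs s).
    by rewrite abs_embM ger0_norm ?hks //; lra.
  rewrite abs_zs in hzs.
  have pos : 0 < abs t ^+ 2 + abs s ^+ 2 - 2 * re (s * conj t).
    by rewrite -abs_sqrB exprn_gt0 // abs_gt0 // subr_eq0.
  have cross : re (s * conj t) <= abs t * abs s.
    by rewrite [_ * abs s]mulrC; exact: re_mul_conj_le.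
  rewrite abs_sqrB re_mul_conj_emb2.
  exact: max_strongly_monotone_cross e0 (abs_gt0 t0) B0 kt1 ks1 hkt hks cross pos hzs.
Qed.

Lemma norm2_sqr n (v : 'cV[F]_n) : norm2 v ^+ 2 = \sum_i abs (v i 0) ^+ 2.
Proof. by rewrite sqr_sqrtr // sumr_ge0 // => i _; rewrite sqr_ge0. Qed.

Lemma norm2_ge0 n (v : 'cV[F]_n) : 0 <= norm2 v.
Proof. exact: sqrtr_ge0. Qed.

Lemma norm2_gt0 n (v : 'cV[F]_n) : v != 0 -> 0 < norm2 v.
Proof.
case/cV0Pn => i vi; rewrite sqrtr_gt0 (bigD1 i) //= ltr_pwDl ?exprn_gt0 ?abs_gt0 //.
by rewrite sumr_ge0 // => j _; rewrite sqr_ge0.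
Qed.

Lemma re_inner n (x y : 'cV[F]_n) : re (inner x y) = \sum_i re (x i 0 * conj (y i 0)).
Proof. exact: raddf_sum. Qed.

Lemma re_inner_self n (x : 'cV[F]_n) : re (inner x x) = norm2 x ^+ 2.
Proof. by rewrite re_inner norm2_sqr; apply: eq_bigr => i _; rewrite (re_mul_conj FA). Qed.

Lemma innerBr n (x y y' : 'cV[F]_n) : inner x (y - y') = inner x y - inner x y'.
Proof.
by rewrite /inner -sumrB; apply: eq_bigr => i _; rewrite !mxE rmorphB mulrBr.
Qed.

Lemma innerZl n u (x y : 'cV[F]_n) : inner (u *: x) y = u * inner x y.
Proof. by rewrite /inner mulr_sumr; apply: eq_bigr => i _; rewrite mxE mulrA. Qed.

Lemma inner_adjointr m n (A : 'M[F]_(m, n)) (x : 'cV[F]_n) (y : 'cV[F]_m) :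
  inner x (adjoint A *m y) = inner (A *m x) y.
Proof.
rewrite /inner; under eq_bigr => i _ do rewrite mxE rmorph_sum mulr_sumr.
rewrite exchange_big /=; apply: eq_bigr => j _; rewrite mxE mulr_suml.
by apply: eq_bigr => i _; rewrite !mxE rmorphM /= (conjK FA) mulrCA mulrA.
Qed.

Lemma inner_delta_l n (i : 'I_n) (y : 'cV[F]_n) : inner (delta_mx i 0) y = conj (y i 0).
Proof.
rewrite /inner (bigD1 i) //= big1 ?addr0 => [|j /negbTE ji]; rewrite mxE.
  by rewrite !eqxx mul1r.
by rewrite ji mul0r.
Qed.

Lemma norm2D_sqr n (x y : 'cV[F]_n) :
  norm2 (x + y) ^+ 2 = norm2 x ^+ 2 + 2 * re (inner y x) + norm2 y ^+ 2.
Proof.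
rewrite !norm2_sqr re_inner mulr_sumr -!big_split /=.
by apply: eq_bigr => i _; rewrite mxE abs_sqrD.
Qed.

Lemma norm2Z n u (x : 'cV[F]_n) : norm2 (u *: x) = abs u * norm2 x.
Proof.
apply/eqP; rewrite -(@eqrXn2 _ 2) ?mulr_ge0 ?norm2_ge0 ?(abs_ge0 FA) //.
rewrite exprMn !norm2_sqr mulr_sumr; apply/eqP/eq_bigr => i _.
by rewrite mxE (absM FA) exprMn.
Qed.

Lemma norm2_0 n : norm2 (0 : 'cV[F]_n) = 0.
Proof. by rewrite /norm2 big1 ?sqrtr0 // => i _; rewrite mxE abs0 expr0n. Qed.

Lemma inner0l n (y : 'cV[F]_n) : inner 0 y = 0.
Proof. by rewrite /inner big1 // => i _; rewrite mxE mul0r. Qed.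

Lemma norm2_delta n (i : 'I_n) : norm2 (delta_mx i 0 : 'cV[F]_n) = 1.
Proof.
rewrite /norm2 (bigD1 i) //= big1 ?addr0 => [|j /negbTE ji]; rewrite mxE.
  by rewrite !eqxx -(rmorph1 emb) (abs_emb FA) normr1 expr1n sqrtr1.
by rewrite ji abs0 expr0n.
Qed.

Lemma Kreg_delta_step m n (A : 'M[F]_(m, n)) b mu (x : 'cV[F]_n) i u :
  Kreg A b mu (x + u *: delta_mx i 0) - Kreg A b mu x =
  q2_entry mu (x i 0 + u) - q2_entry mu (x i 0) +
  2 * re (u * conj ((adjoint A *m (A *m x - b)) i 0)) +
  norm2 (A *m delta_mx i 0) ^+ 2 * abs u ^+ 2.
Proof.
have Q2_step : Q2_card mu (x + u *: delta_mx i 0) - Q2_card mu x =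
    q2_entry mu (x i 0 + u) - q2_entry mu (x i 0).
  rewrite /Q2_card -sumrB (bigD1 i) //= big1 ?addr0 => [|j /negbTE ji];
    rewrite !mxE ?eqxx ?ji ?mulr1 ?mulr0 ?addr0 //.
  by rewrite subrr.
rewrite /Kreg.
have -> : A *m (x + u *: delta_mx i 0) - b = (A *m x - b) + u *: (A *m delta_mx i 0).
  by rewrite mulmxDr scalemxAr addrAC.
rewrite norm2D_sqr norm2Z exprMn innerZl -inner_adjointr inner_delta_l.
rewrite opprD addrACA Q2_step; ring.
Qed.

Lemma stationary_delta m n (A : 'M[F]_(m, n)) b mu (x : 'cV[F]_n) i :
  stationary (Kreg A b mu) x ->
  forall eps, 0 < eps -> exists2 d, 0 < d & forall u, 0 < abs u -> abs u < d ->
    - eps * abs u <=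
    q2_entry mu (x i 0 + u) - q2_entry mu (x i 0) +
    2 * re (u * conj ((adjoint A *m (A *m x - b)) i 0)) +
    norm2 (A *m delta_mx i 0) ^+ 2 * abs u ^+ 2.
Proof.
move=> st eps eps0; have [d d0 hd] := st eps eps0; exists d => // u u0 ud.
have du : norm2 (u *: delta_mx i 0 : 'cV[F]_n) = abs u.
  by rewrite norm2Z norm2_delta mulr1.
have yx : x + u *: delta_mx i 0 - x = u *: delta_mx i 0 by rewrite addrAC subrr add0r.
have yx0 : x + u *: delta_mx i 0 != x.
  by apply: contraTneq u0 => yx_eq; rewrite -du -yx yx_eq subrr norm2_0 ltxx.
have := hd _ yx0; rewrite yx du => /(_ ud).
by rewrite inner0l raddf0 subr0 ler_pdivlMr // Kreg_delta_step.
Qed.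

Lemma re_inner_gt n c (w v : 'cV[F]_n) : w != 0 ->
  (forall i, w i 0 != 0 -> c * abs (w i 0) ^+ 2 < re (w i 0 * conj (v i 0))) ->
  c * norm2 w ^+ 2 < re (inner w v).
Proof.
case/cV0Pn => i0 wi0 gap.
rewrite norm2_sqr mulr_sumr re_inner (bigD1 i0) //= [X in _ < X](bigD1 i0) //=.
apply: ltr_leD; first exact: gap.
apply: ler_sum => i _; have [wi|wi] := eqVneq (w i 0) 0; last exact/ltW/gap.
by rewrite wi abs0 expr0n mulr0 mul0r raddf0.
Qed.

Lemma cV_subE n (x y : 'cV[F]_n) i : (x - y) i 0 = x i 0 - y i 0.
Proof. by rewrite !mxE. Qed.

Lemma stationary_entries m n (A : 'M[F]_(m, n)) b mu (x : 'cV[F]_n) i :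
  stationary (Kreg A b mu) x ->
  stationary_entry mu (x i 0) (((1%:M - adjoint A *m A) *m x + adjoint A *m b) i 0).
Proof.
move=> st; set g := adjoint A *m (A *m x - b).
have -> : (1%:M - adjoint A *m A) *m x + adjoint A *m b = x - g.
  by rewrite /g mulmxBl mul1mx mulmxBr -mulmxA opprB addrA [LHS]addrAC.
rewrite cV_subE; exact: stationary_entry_of_slope (stationary_delta i st).
Qed.

Lemma beta_le_ratio m n (A : 'M[F]_(m, n)) N (w : 'cV[F]_n) :
  w != 0 -> (card_nz w <= N)%N -> beta A N <= norm2 (A *m w) / norm2 w.
Proof.
move=> w0 small; apply: ge_inf; last by exists w.
by exists 0 => r [v [_ _ ->]]; rewrite divr_ge0 ?norm2_ge0.
Qed.

Lemma stationary_Kreg_card_gt m n (A : 'M[F]_(m, n)) b mu N (x' x'' : 'cV[F]_n) :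
  0 < beta A N -> stationary (Kreg A b mu) x' ->
  (forall i : 'I_n,
     let z' := (1%:M - adjoint A *m A) *m x' + adjoint A *m b in
     ~ (beta A N ^+ 2 * Num.sqrt mu <= abs (z' i 0) <= Num.sqrt mu / beta A N ^+ 2)) ->
  stationary (Kreg A b mu) x'' -> x'' != x' ->
  (N < card_nz (x'' - x'))%N.
Proof.
move=> beta0 st' outside st'' neq; rewrite ltnNge; apply/negP => small.
set B := beta A N ^+ 2 in outside; have B0 : 0 < B by rewrite exprn_gt0.
set w := x'' - x' in small; have w0 : w != 0 by rewrite subr_eq0.
pose z (x : 'cV[F]_n) := (1%:M - adjoint A *m A) *m x + adjoint A *m b.
have ratio : B * norm2 w ^+ 2 <= norm2 (A *m w) ^+ 2.
  have := beta_le_ratio A w0 small; rewrite ler_pdivlMr ?norm2_gt0 // => h.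
  by rewrite -exprMn lerXn2r // ?nnegrE ?mulr_ge0 ?norm2_ge0 // ltW.
have gap : (1 - B) * norm2 w ^+ 2 < re (inner w (z x'' - z x')).
  apply: (re_inner_gt (c := 1 - B) w0) => i; rewrite /w !cV_subE subr_eq0 => wi.
  exact (stationary_entry_gap B0 (stationary_entries i st') (stationary_entries i st'')
    (outside i) wi).
have dz : z x'' - z x' = w - adjoint A *m (A *m w).
  by rewrite /z opprD addrACA subrr addr0 -mulmxBr mulmxBl mul1mx mulmxA.
move: gap; rewrite dz innerBr inner_adjointr (raddfB re) /= !re_inner_self.
lra.
Qed.

End RCLikeTheory.

Lemma rclike_realF_or_complexF (R : realType) (F : scalar_field R) :
  F = realF R \/ F = complexF R -> inhabited (rclike F).
Proof. by case=> ->; constructor; [exact: rclike_realF | exact: rclike_complexF]. Qed.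

Theorem theorem4p2 (R : realType) (F : scalar_field R)
  (hF : F = realF R \/ F = complexF R)
  (m n : nat) (A : 'M[F]_(m, n)) (b : 'cV[F]_m) (mu : R) (N : nat)
  (x' x'' : 'cV[F]_n) :
  0 < mu -> (1 <= N)%N -> 0 < beta A N ->
  stationary (Kreg A b mu) x' ->
  (forall i : 'I_n,
     let z' := (1%:M - adjoint A *m A) *m x' + adjoint A *m b in
     ~ (beta A N ^+ 2 * Num.sqrt mu <= sc_abs (z' i 0)
        <= Num.sqrt mu / beta A N ^+ 2)) ->
  stationary (Kreg A b mu) x'' -> x'' != x' ->
  (N < card_nz (x'' - x'))%N.
Proof.
move=> _ _ beta0 st' outside st'' neq.
have [FA] := rclike_realF_or_complexF hF.
exact (stationary_Kreg_card_gt FA beta0 st' outside st'' neq).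
Qed.
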